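(* Let $T$ be a hypertree and let $e_1,e_2$ be edges of $T$. Suppose $u_i,v_i\in e_i$ for $i=1,2$, and $d_T(u_1,u_2)=d_T(v_1,v_2)+2$. For $i=1,2$, let $T_i$ be the component of $T-e_i$ containing $u_i$, and let $A_i=\{w\in V(T): d_T(w,u_i)=d_T(w,v_i)\}$. Let $x=x(T)$. Then: (i) $\rho(T)(x_{u_1}-x_{u_2})-\rho(T)(x_{v_1}-x_{v_2})=2(\sigma_T(T_2)-\sigma_T(T_1))+\sigma_T(A_2)-\sigma_T(A_1)$. (ii) If moreover $e_i\setminus\{u_i,v_i\}=\{w_i\}$ and $\deg_T(w_i)=1$ for $i=1,2$, then $(\rho(T)+1)(x_{w_1}-x_{w_2})-\rho(T)(x_{v_1}-x_{v_2})=x_{w_2}-x_{w_1}+\sigma_T(T_2)-\sigma_T(T_1)$ and $\rho(T)(x_{u_1}-x_{u_2})-(\rho(T)+1)(x_{w_1}-x_{w_2})=\sigma_T(T_2)-\sigma_T(T_1)$.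
   Context: A (simple) hypergraph has edges that are subsets of the vertex set of size at least two. A loose path from $v_0$ to $v_p$ of length $p$ is an alternating sequence $(v_0,e_1,v_1,\dots,e_p,v_p)$ of distinct vertices and distinct edges with $v_{i-1},v_i\in e_i$ and $e_i\cap e_j=\emptyset$ whenever $j>i+1$; loose cycles are defined analogously (closed, with non-consecutive edges disjoint). A hypertree is a connected hypergraph (any two vertices joined by a loose path) with no loose cycle. $d_T(u,v)$ is the length of a shortest loose path from $u$ to $v$; $D(T)=(d_T(u,v))$ is the distance matrix, $\rho(T)$ its largest eigenvalue, and $x(T)$ the unique unit positive eigenvector of $D(T)$ for $\rho(T)$ (distance Perron vector). The degree $\deg_T(w)$ is the number of edges containing $w$. $T-e$ is the hypergraph on $V(T)$ with edge set $E(T)\setminus\{e\}$. For $V_1\subseteq V(T)$, $\sigma_T(V_1)=\sum_{v\in V_1}x_v$ with $x=x(T)$; for a subhypergraph $H$, $\sigma_T(H)=\sigma_T(V(H))$. *)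

From mathcomp Require Import all_boot all_order all_algebra.
Set Implicit Arguments. Unset Strict Implicit. Unset Printing Implicit Defensive.
Import Order.TTheory GRing.Theory Num.Theory.

Section Hypergraph.
Variable n : nat.
Implicit Types (E : {set {set 'I_n}}) (u v w : 'I_n) (e : {set 'I_n}).

Definition simple_hg E : Prop := forall e, e \in E -> 2 <= #|e|.

(* (v_0,e_1,v_1,...,e_p,v_p) is a loose path in E from u to v of length p:
   vs = (v_0..v_p), es = (e_1..e_p) (0-indexed: edge i joins vs_i and vs_(i+1)) *)
Definition loose_path E u v p (vs : (p.+1).-tuple 'I_n) (es : p.-tuple {set 'I_n}) : bool :=
  [&& tnth vs ord0 == u, tnth vs ord_max == v,
      uniq vs, uniq es,
      all (fun e => e \in E) es,
      [forall i : 'I_p, (tnth vs (widen_ord (leqnSn p) i) \in tnth es i)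
                        && (tnth vs (lift ord0 i) \in tnth es i)] &
      [forall i : 'I_p, forall j : 'I_p,
         (i.+1 < j) ==> [disjoint tnth es i & tnth es j]]].

Definition has_loose_path E u v p : bool :=
  [exists vs : (p.+1).-tuple 'I_n, exists es : p.-tuple {set 'I_n}, loose_path E u v vs es].

(* loose cycle (v_0,e_1,v_1,...,e_p,v_0) of length p >= 2: distinct vertices,
   distinct edges, consecutive (cyclically) vertices in each edge,
   non-consecutive (cyclically) edges disjoint *)
Definition loose_cycle E p (vs : p.-tuple 'I_n) (es : p.-tuple {set 'I_n}) : bool :=
  [&& 2 <= p, uniq vs, uniq es,
      all (fun e => e \in E) es,
      [forall i : 'I_p, (tnth vs i \in tnth es i) && (tnth vs (ordS i) \in tnth es i)] &
      [forall i : 'I_p, forall j : 'I_p,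
         [&& i < j, j != i.+1 :> nat & ~~ ((i == 0 :> nat) && (j == p.-1 :> nat))]
         ==> [disjoint tnth es i & tnth es j]]].

Definition hg_connected E : Prop := forall u v, exists p, has_loose_path E u v p.

Definition hypertree E : Prop :=
  [/\ simple_hg E, hg_connected E &
      forall p (vs : p.-tuple 'I_n) (es : p.-tuple {set 'I_n}), ~~ loose_cycle E vs es].

(* d_T(u,v): length of a shortest loose path (a loose path has distinct vertices,
   so its length is < n) *)
Definition hdist E u v : nat := \big[minn/n]_(p < n | has_loose_path E u v p) p.

Definition hdeg E w : nat := #|[set e in E | w \in e]|.

Definition comp_del E e u : {set 'I_n} :=
  [set w | [exists p : 'I_n, has_loose_path (E :\ e) u w p]].

Variable R : rcfType.
Local Open Scope ring_scope.

Definition distmx E : 'M[R]_n := \matrix_(i, j) (hdist E i j)%:R.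

Definition distance_perron E (rho : R) (x : 'cV[R]_n) : Prop :=
  [/\ eigenvalue (distmx E) rho,
      forall mu, eigenvalue (distmx E) mu -> mu <= rho,
      distmx E *m x = rho *: x,
      forall i, 0 < x i 0 &
      \sum_i x i 0 ^+ 2 = 1].

Definition sigma (x : 'cV[R]_n) (V1 : {set 'I_n}) : R := \sum_(v in V1) x v 0.

End Hypergraph.

(* A walk in which every step stays inside an edge is a loose path as soon as it is
   shortest: a repeated vertex or edge, or two non-consecutive edges that meet, would
   shortcut it. So d_T is the distance of the 2-section graph. Deleting an edge e of
   the hypertree T leaves one component T_c through each vertex c of e, since a path
   of T - e joining two vertices of e would close a loose cycle with e. Hence every
   walk from c' in e to w in T_c passes through c: d(c', w) = d(c, w) + 1 for c' <> c.
   For a <> b in e the rows a and b of D(T) thus differ by the indicator of T_b minus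
   that of T_a, and {w | d(w, a) = d(w, b)} is the complement of the union of T_a, T_b;
   reading off D x = rho x gives
     rho (x_a - x_b) = sigma(T_b) - sigma(T_a)  and  sigma(A) + sigma(T_a) + sigma(T_b) = sum x.
   Both parts of the theorem are linear combinations of these identities for the pairs
   (u_i, v_i) and, in (ii), (w_i, v_i), where the leaf w_i has T_{w_i} = A_i = {w_i}.
   The hypothesis d(u1, u2) = d(v1, v2) + 2 only serves to make u_i <> v_i. *)

From mathcomp Require Import all_boot all_order all_algebra.
From mathcomp Require Import zify lra.
Import Order.TTheory GRing.Theory Num.Theory.
Set Implicit Arguments. Unset Strict Implicit. Unset Printing Implicit Defensive.

Lemma mem_setD_pair (T : finType) (A : {set T}) (u v w : T) :
  A :\: [set u; v] = [set w] -> [/\ w \in A, w != u & w != v].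
Proof. by move/setP/(_ w); rewrite !inE eqxx negb_or => /andP[/andP[]]. Qed.

Section Walks.
Variable n : nat.
Implicit Types (F : {set {set 'I_n}}) (u v w x y z : 'I_n) (f : {set 'I_n}).

Definition hadj F x y : bool := [exists f in F, (x \in f) && (y \in f)].

Fixpoint hball F v k : {set 'I_n} :=
  if k is k'.+1 then hball F v k' :|: [set y | [exists x in hball F v k', hadj F x y]]
  else [set v].

Lemma hadj_edge F f x y : f \in F -> x \in f -> y \in f -> hadj F x y.
Proof. by move=> Ff xf yf; apply/existsP; exists f; rewrite Ff xf yf. Qed.

Lemma hadjC F x y : hadj F x y = hadj F y x.
Proof. by apply/existsP/existsP => -[f /and3P[Ff xf yf]]; exists f; rewrite Ff xf yf. Qed.

Lemma hball0 F v u : (u \in hball F v 0) = (u == v).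
Proof. exact: in_set1. Qed.

Lemma hballS F v k u :
  (u \in hball F v k.+1) = (u \in hball F v k) || [exists x in hball F v k, hadj F x u].
Proof. by rewrite /= in_setU in_set. Qed.

Lemma hballS_inv F v k y : y \in hball F v k.+1 ->
  y \in hball F v k \/ exists2 x, x \in hball F v k & hadj F x y.
Proof. by rewrite hballS => /orP[|/existsP[x /andP[]]]; [left | right; exists x]. Qed.

Lemma hball_step F v k x y : x \in hball F v k -> hadj F x y -> y \in hball F v k.+1.
Proof. by move=> xk xy; rewrite hballS; apply/orP; right; apply/existsP; exists x; rewrite xk. Qed.

Lemma hball_le F v k m u : k <= m -> u \in hball F v k -> u \in hball F v m.
Proof. by move=> /subnK <- uk; elim: (m - k) => [|d IH] //; rewrite addSn hballS IH. Qed.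

Lemma hball_center F v k : v \in hball F v k.
Proof. by apply: (@hball_le _ _ 0); rewrite ?hball0. Qed.

Lemma hball_edge F f a b : f \in F -> a \in f -> b \in f -> b \in hball F a 1.
Proof. by move=> Ff af bf; apply: hball_step (hball_center _ _ _) (hadj_edge Ff af bf). Qed.

Lemma hball_trans F v u w k m :
  u \in hball F v k -> w \in hball F u m -> w \in hball F v (k + m).
Proof.
move=> uk; elim: m w => [|m IH] w; first by rewrite hball0 addn0 => /eqP->.
rewrite addnS => /hballS_inv[/IH/(hball_le (leqnSn _)) // | [x /IH xkm xw]].
exact: hball_step xkm xw.
Qed.

Lemma hball_sym F v u k : u \in hball F v k -> v \in hball F u k.
Proof.
elim: k u => [|k IH] u; first by rewrite !hball0 eq_sym.
case/hballS_inv => [/IH/(hball_le (leqnSn _)) // | [x /IH vx]].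
rewrite hadjC => /(hball_step (hball_center F u 0)) ux.
by rewrite -add1n; apply: hball_trans ux vx.
Qed.

Record loose_seq_path F u v (s : seq 'I_n) (t : seq {set 'I_n}) : Prop := LooseSeqPath {
  lsp_size : size s = (size t).+1;
  lsp_head : nth v s 0 = u;
  lsp_last : nth v s (size t) = v;
  lsp_uniq_vertices : uniq s;
  lsp_uniq_edges : uniq t;
  lsp_edges : {subset t <= F};
  lsp_incident : forall i, i < size t ->
    (nth v s i \in nth set0 t i) && (nth v s i.+1 \in nth set0 t i);
  lsp_disjoint : forall i j, i.+1 < j -> j < size t ->
    [disjoint nth set0 t i & nth set0 t j] }.

Lemma has_loose_pathP F u v p :
  has_loose_path F u v p <-> exists s t, size t = p /\ loose_seq_path F u v s t.
Proof.
split.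
  case/existsP => vs /existsP[es /and5P[/eqP vs0 /eqP vsp uvs ues /and3P[Fes inc disj]]].
  exists vs, es; split; first exact: size_tuple.
  constructor; rewrite ?size_tuple //.
  - by rewrite -vs0 (tnth_nth v).
  - by move: vsp; rewrite (tnth_nth v).
  - exact/allP.
  - move=> i lt_ip; move/forallP: inc => /(_ (Ordinal lt_ip)).
    by rewrite !(tnth_nth v) !(tnth_nth set0).
  - move=> i j lt_ij lt_jp; have lt_ip : i < p by apply: ltn_trans lt_jp; apply: ltnW.
    move/forallP: disj => /(_ (Ordinal lt_ip)) /forallP /(_ (Ordinal lt_jp)) /implyP /(_ lt_ij).
    by rewrite !(tnth_nth set0).
case=> s [t [<- [sz s0 sl us ut Ft inc disj]]].
have ss : size s == (size t).+1 by rewrite sz.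
apply/existsP; exists (Tuple ss); apply/existsP; exists (in_tuple t).
apply/and5P; split; rewrite ?(tnth_nth v) /= ?s0 ?sl //; apply/and3P; split.
- by apply/allP => f /Ft.
- by apply/forallP => i; rewrite !(tnth_nth v) !(tnth_nth set0) /= inc.
- apply/forallP => i; apply/forallP => j; apply/implyP => lt_ij.
  by rewrite !(tnth_nth set0) disj.
Qed.

Section LooseSeqPath.
Variables (F : {set {set 'I_n}}) (u v : 'I_n) (s : seq 'I_n) (t : seq {set 'I_n}).
Hypothesis P : loose_seq_path F u v s t.

Lemma lsp_edge_in i : i < size t -> nth set0 t i \in F.
Proof. by move=> lt_it; apply: (lsp_edges P); rewrite mem_nth. Qed.

Lemma lsp_size_lt : size t < n.
Proof.
have := card_uniqP (lsp_uniq_vertices P); rewrite (lsp_size P) => <-.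
by have := max_card (mem s); rewrite card_ord.
Qed.

Lemma lsp_hball i j : i <= j -> j <= size t -> nth v s j \in hball F (nth v s i) (j - i).
Proof.
elim: j => [|j IH]; first by rewrite leqn0 => /eqP-> _; apply: hball_center.
rewrite leq_eqVlt ltnS => /orP[/eqP<- _|le_ij lt_jt]; first by rewrite subnn hball_center.
rewrite subSn //; apply: hball_step (IH le_ij (ltnW lt_jt)) _.
by have /andP[sj sj1] := lsp_incident P lt_jt; apply: hadj_edge (lsp_edge_in lt_jt) sj sj1.
Qed.

Lemma lsp_hball_last i : i <= size t -> nth v s i \in hball F v (size t - i).
Proof.
by move=> le_it; apply: hball_sym; have := lsp_hball le_it (leqnn _); rewrite (lsp_last P).
Qed.

Lemma lsp_edge_hball_last i z : i < size t -> z \in nth set0 t i -> z \in hball F v (size t - i).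
Proof.
move=> lt_it zt; have /andP[_ si1] := lsp_incident P lt_it.
have := hball_trans (lsp_hball_last lt_it) (hball_edge (lsp_edge_in lt_it) si1 zt).
by rewrite addn1 subnSK.
Qed.

End LooseSeqPath.

Lemma loose_seq_path_cons F u v y f s t :
  loose_seq_path F y v s t -> f \in F -> y \in f -> u \in f ->
  u \notin hball F v (size t) -> loose_seq_path F u v (u :: s) (f :: t).
Proof.
move=> P Ff yf uf u_far.
have u_s : u \notin s.
  apply: contra u_far => /(nthP v)[i lt_is <-].
  by apply: hball_le (leq_subr i _) (lsp_hball_last P _); rewrite -ltnS -(lsp_size P).
have f_t : f \notin t.
  apply: contra u_far => /(nthP set0)[i lt_it ti].
  by apply: hball_le (leq_subr i _) (lsp_edge_hball_last P lt_it _); rewrite ti.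
have [sz s0 sl us ut Ft inc disj] := P.
constructor => /=; rewrite ?sz ?sl ?u_s ?us ?f_t ?ut //.
- by move=> g; rewrite inE => /orP[/eqP-> | /Ft].
- by case=> [|i] /=; [rewrite uf s0 yf | rewrite ltnS; apply: inc].
case=> [|i] [|j] //=; rewrite !ltnS => lt_ij lt_jt; last exact: disj.
rewrite disjoints_subset; apply/subsetP => z zf; rewrite inE.
apply: contra u_far => ztj.
have := hball_trans (lsp_edge_hball_last P lt_jt ztj) (hball_edge Ff zf uf).
by apply: hball_le; lia.
Qed.

Lemma hball_min_loose_seq_path F u v k : u \in hball F v k ->
  (forall m, m < k -> u \notin hball F v m) ->
  exists s t, size t = k /\ loose_seq_path F u v s t.
Proof.
elim: k u => [|k IH] u.
  by rewrite hball0 => /eqP-> _; exists [:: v], [::]; split; constructor.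
case/hballS_inv => [u_k | [y y_k /existsP[f /and3P[Ff yf uf]]]] u_min.
  by have := u_min k (ltnSn k); rewrite u_k.
have y_min m : m < k -> y \notin hball F v m.
  move=> lt_mk; apply: contra (u_min m.+1 lt_mk) => y_m.
  exact: hball_step y_m (hadj_edge Ff yf uf).
have [s [t [tk P]]] := IH y y_k y_min.
exists (u :: s), (f :: t); split; first by rewrite /= tk.
by apply: loose_seq_path_cons P Ff yf uf _; rewrite tk u_min.
Qed.

Lemma has_loose_path_hball F u v p : has_loose_path F u v p -> u \in hball F v p /\ p < n.
Proof.
case/has_loose_pathP => s [t [<- P]]; split; last exact: lsp_size_lt P.
by have := lsp_hball_last P (leq0n _); rewrite subn0 (lsp_head P).
Qed.

Lemma hball_has_loose_path F u v k :
  u \in hball F v k -> exists2 m, m <= k & has_loose_path F u v m.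
Proof.
move=> u_k; have ex_k : exists m, u \in hball F v m by exists k.
case: (ex_minnP ex_k) => m u_m m_min; exists m; first exact: m_min.
apply/has_loose_pathP/(hball_min_loose_seq_path u_m) => j lt_jm.
by apply/negP => /m_min; rewrite leqNgt lt_jm.
Qed.

Lemma hdist_le_path F u v p : has_loose_path F u v p -> hdist F u v <= p.
Proof.
move=> uvp; have [_ lt_pn] := has_loose_path_hball uvp.
rewrite /hdist -minEnat.
exact: (bigmin_le_cond _ (j := Ordinal lt_pn) (fun i : 'I_n => i : nat) uvp).
Qed.

Lemma hdist_leP F u v k : hg_connected F -> (hdist F u v <= k) = (u \in hball F v k).
Proof.
move=> conn; apply/idP/idP.
  apply: contraTT => u_far; rewrite -ltnNge /hdist -minEnat.
  apply: (lt_bigmin (T := nat)) => [|p /has_loose_path_hball[u_p _]]; rewrite ltEnat /= ltnNge.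
    apply: contra u_far => le_nk; have [p /has_loose_path_hball[u_p lt_pn]] := conn u v.
    exact: hball_le (ltnW (leq_trans lt_pn le_nk)) u_p.
  by apply: contra u_far => le_pk; apply: hball_le le_pk u_p.
by case/hball_has_loose_path => m le_mk /hdist_le_path /leq_trans; apply.
Qed.

Lemma hdist_hball F u v : hg_connected F -> u \in hball F v (hdist F u v).
Proof. by move=> conn; rewrite -hdist_leP. Qed.

Lemma hdist_sym F u v : hg_connected F -> hdist F u v = hdist F v u.
Proof.
move=> conn; apply/eqP; rewrite eqn_leq !hdist_leP //.
by apply/andP; split; apply: hball_sym; apply: hdist_hball.
Qed.

Lemma hdist_edge_le F f a b w : hg_connected F -> f \in F -> a \in f -> b \in f ->
  hdist F w a <= (hdist F w b).+1.
Proof.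
move=> conn Ff af bf; rewrite hdist_leP // -add1n.
exact: hball_trans (hball_edge Ff af bf) (hdist_hball _ _ conn).
Qed.

End Walks.

Section EdgeDeletion.
Variables (n : nat) (E : {set {set 'I_n}}) (e : {set 'I_n}).
Hypotheses (HT : hypertree E) (He : e \in E).
Local Notation F := (E :\ e).
Local Notation T c := (comp_del E e c).

Let conn : hg_connected E. Proof. by case: HT. Qed.

Lemma no_loose_seq_cycle (s : seq 'I_n) (t : seq {set 'I_n}) (d0 : 'I_n) :
  size t = size s -> 2 <= size s -> uniq s -> uniq t -> {subset t <= E} ->
  (forall i, i < size s ->
     (nth d0 s i \in nth set0 t i) && (nth d0 s (i.+1 %% size s) \in nth set0 t i)) ->
  (forall i j, i < j -> j < size s -> j != i.+1 -> ~~ ((i == 0) && (j == (size s).-1)) ->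
     [disjoint nth set0 t i & nth set0 t j]) ->
  False.
Proof.
have [_ _ acyclic] := HT; move=> ts s2 us ut tE inc disj.
have ts' : size t == size s by rewrite ts.
move/negP: (acyclic _ (in_tuple s) (Tuple ts')); apply.
rewrite /loose_cycle s2 us ut /=; apply/and3P; split.
- by apply/allP => f /tE.
- by apply/forallP => i; rewrite !(tnth_nth d0) !(tnth_nth set0) /= inc.
- apply/forallP => i; apply/forallP => j; apply/implyP => /and3P[lt_ij j_i1 not_ends].
  by rewrite !(tnth_nth set0) disj.
Qed.

Lemma no_minimal_bypass x y s t : x \in e -> y \in e -> x != y ->
  loose_seq_path F x y s t ->
  (forall m a b, m < size t -> a \in e -> b \in e -> a != b -> a \notin hball F b m) ->
  False.
Proof.
move=> xe ye xy P shorter.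
have [sz s0 sl us ut Ft inc disj] := P.
have tE : {subset t <= E} by move=> f /Ft; rewrite inE => /andP[].
have t_gt0 : 0 < size t by case: (size t) sl => // sl; move: xy; rewrite -s0 sl eqxx.
apply: (@no_loose_seq_cycle s (rcons t e) y).
- by rewrite size_rcons sz.
- by rewrite sz ltnS.
- exact: us.
- by rewrite rcons_uniq ut andbT; apply: contraL He => /Ft; rewrite !inE eqxx.
- by move=> f; rewrite mem_rcons inE => /orP[/eqP-> | /tE].
- move=> i; rewrite sz ltnS leq_eqVlt => /orP[/eqP-> | lt_it].
    by rewrite nth_rcons ltnn eqxx modnn s0 sl xe ye.
  by rewrite nth_rcons lt_it modn_small ?ltnS // inc.
move=> i j lt_ij; rewrite sz ltnS leq_eqVlt => /orP[/eqP jt | lt_jt] j_i1 not_ends; last first.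
  rewrite !nth_rcons lt_jt (ltn_trans lt_ij lt_jt) disj //.
  by rewrite ltn_neqAle eq_sym j_i1.
subst j; rewrite nth_rcons lt_ij nth_rcons ltnn eqxx.
have i_gt0 : 0 < i by move: not_ends; rewrite /= eqxx andbT lt0n.
have lt_i1t : i.+1 < size t by rewrite ltn_neqAle eq_sym j_i1 lt_ij.
rewrite disjoints_subset; apply/subsetP => z zti; rewrite inE; apply/negP => ze.
have z_near_y : z \in hball F y (size t - i) := lsp_edge_hball_last P lt_ij zti.
have z_near_x : z \in hball F x i.+1.
  have /andP[si _] := inc i lt_ij.
  have := hball_edge (lsp_edge_in P lt_ij) si zti.
  by move/(hball_trans (lsp_hball P (leq0n i) (ltnW lt_ij))); rewrite s0 subn0 addn1.
(* z on e and on t_i yields a shorter bypass: z--y along the end of the path, or,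
   when z = y, y--x along its start. *)
have [zy | zy] := eqVneq z y.
  by move: z_near_x; rewrite zy; apply/negP; apply: shorter; rewrite // eq_sym.
by move: z_near_y; apply/negP; apply: shorter => //; rewrite ltn_subrL i_gt0.
Qed.

Lemma no_bypass k x y : x \in e -> y \in e -> x != y -> x \notin hball F y k.
Proof.
elim/ltn_ind: k x y => k IH x y xe ye xy; apply/negP => x_k.
have [s [t [tk P]]] := hball_min_loose_seq_path x_k (fun m lt_mk => IH m lt_mk x y xe ye xy).
by apply: (no_minimal_bypass xe ye xy P) => m a b; rewrite tk => /IH; apply.
Qed.

Lemma in_comp_del c w : w \in T c <-> exists k, w \in hball F c k.
Proof.
rewrite inE; split => [/existsP[p /has_loose_path_hball[/hball_sym c_p _]] | [k]].
  by exists p.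
move=> /hball_sym/hball_has_loose_path[m _ cwm]; apply/existsP.
by have [_ lt_mn] := has_loose_path_hball cwm; exists (Ordinal lt_mn).
Qed.

Lemma comp_del_self c : c \in T c.
Proof. by apply/in_comp_del; exists 0; apply: hball_center. Qed.

Lemma comp_del_cover c0 w : c0 \in e -> exists2 c, c \in e & w \in T c.
Proof.
move=> c0e; have [p /has_loose_path_hball[/hball_sym w_p _]] := conn c0 w.
elim: p w w_p => [|p IH] w; first by rewrite hball0 => /eqP->; exists c0; rewrite ?comp_del_self.
case/hballS_inv => [/IH // | [z /IH[c ce /in_comp_del[k z_k]] /existsP[f /and3P[Ef zf wf]]]].
have [fe | fe] := eqVneq f e; first by exists w; [rewrite -fe | apply: comp_del_self].
exists c => //; apply/in_comp_del; exists (k + 1).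
by apply: hball_trans z_k (hball_edge _ zf wf); rewrite !inE fe.
Qed.

Lemma comp_del_uniq c c' w : c \in e -> c' \in e -> w \in T c -> (w \in T c') = (c' == c).
Proof.
move=> ce c'e /in_comp_del[k w_k]; apply/idP/eqP => [/in_comp_del[m w_m] | ->].
  apply/eqP; have := hball_trans w_k (hball_sym w_m).
  by apply: contraTT => c'c; apply: no_bypass.
by apply/in_comp_del; exists k.
Qed.

Lemma comp_del_hball_pred c c' k w : c \in e -> c' \in e -> c' != c ->
  w \in T c -> w \in hball E c' k -> 0 < k /\ w \in hball E c k.-1.
Proof.
move=> ce c'e c'c; elim: k w => [|k IH] w wc.
  rewrite hball0 => /eqP wc'; rewrite wc' in wc.
  by have := comp_del_uniq ce c'e wc; rewrite comp_del_self (negbTE c'c).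
case/hballS_inv => [/(IH _ wc)[_ w_k] | [z z_k /existsP[f /and3P[Ef zf wf]]]].
  by split => //; apply: hball_le (leq_pred k) w_k.
split => //=; have [fe | fe] := eqVneq f e.
  rewrite fe in wf; have := comp_del_uniq ce wf wc.
  by rewrite comp_del_self => /esym/eqP->; apply: hball_center.
have zc : z \in T c.
  case/in_comp_del: wc => m w_m; apply/in_comp_del; exists (m + 1).
  by apply: hball_trans w_m (hball_edge _ wf zf); rewrite !inE fe.
have [k_gt0 z_k1] := IH z zc z_k.
by rewrite -(prednK k_gt0); apply: hball_step z_k1 (hadj_edge Ef zf wf).
Qed.

Lemma hdist_comp_del c c' w : c \in e -> c' \in e -> c' != c -> w \in T c ->
  hdist E c' w = (hdist E c w).+1.
Proof.
move=> ce c'e c'c wc; apply/eqP; rewrite eqn_leq; apply/andP; split.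
  rewrite hdist_leP // -addn1.
  exact: hball_trans (hdist_hball _ _ conn) (hball_edge He ce c'e).
have [K_gt0 w_K] := comp_del_hball_pred ce c'e c'c wc (hball_sym (hdist_hball c' w conn)).
have : hdist E c w <= (hdist E c' w).-1 by rewrite hdist_leP //; apply: hball_sym.
by rewrite -ltnS prednK.
Qed.

Lemma comp_del_leaf w : hdeg E w = 1%N -> w \in e -> T w = [set w].
Proof.
move=> deg1 we; apply/setP => z; rewrite in_set1.
apply/idP/eqP => [/in_comp_del[k] | ->]; last exact: comp_del_self.
elim: k z => [|k IH] z; first by rewrite hball0 => /eqP.
case/hballS_inv => [/IH // | [y /IH-> /existsP[f /and3P[]]]].
rewrite !inE => /andP[fe Ef] wf _; exfalso.
have : #|[set e; f]| <= hdeg E w.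
  apply: subset_leq_card; apply/subsetP => g.
  by rewrite !inE => /orP[]/eqP->; rewrite ?He ?we ?Ef ?wf.
by rewrite cards2 eq_sym fe deg1.
Qed.

Variant edge_side_spec a b w : bool -> bool -> Prop :=
  | EdgeSideA of hdist E b w = (hdist E a w).+1 : edge_side_spec a b w true false
  | EdgeSideB of hdist E a w = (hdist E b w).+1 : edge_side_spec a b w false true
  | EdgeSideNeither of hdist E a w = hdist E b w : edge_side_spec a b w false false.

Lemma edge_sideP a b w : a \in e -> b \in e -> a != b ->
  edge_side_spec a b w (w \in T a) (w \in T b).
Proof.
move=> ae be ab; have [c ce wc] := comp_del_cover w ae.
rewrite (comp_del_uniq ce ae wc) (comp_del_uniq ce be wc).
have [ac | ac] := eqVneq a c; have [bc | bc] := eqVneq b c.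
- by rewrite ac bc eqxx in ab.
- by subst c; apply: EdgeSideA; apply: hdist_comp_del.
- by subst c; apply: EdgeSideB; apply: hdist_comp_del.
- by apply: EdgeSideNeither; rewrite (hdist_comp_del ce ae ac wc) (hdist_comp_del ce be bc wc).
Qed.

Lemma eq_hdist_edgeE a b w : a \in e -> b \in e -> a != b ->
  (w \in [set z | hdist E z a == hdist E z b]) = (w \notin T a) && (w \notin T b).
Proof.
move=> ae be ab; rewrite [w \in _]inE !(hdist_sym w) //.
by case: (edge_sideP w ae be ab) => ->; rewrite ?eqxx // ?(ltn_eqF (ltnSn _)) ?(gtn_eqF (ltnSn _)).
Qed.

Lemma eq_hdist_leaf u v w : u \in e -> v \in e -> u != v ->
  e :\: [set u; v] = [set w] -> hdeg E w = 1%N ->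
  [set z | hdist E z u == hdist E z v] = [set w].
Proof.
move=> ue ve uv ew deg1; have [we _ _] := mem_setD_pair ew.
rewrite -(comp_del_leaf deg1 we); apply/setP => z; rewrite eq_hdist_edgeE //.
have [c ce zc] := comp_del_cover z ue; rewrite !(comp_del_uniq ce _ zc) //.
have /setP/(_ c) := ew; rewrite !inE ce andbT negb_or.
by rewrite (eq_sym u) (eq_sym v) (eq_sym w).
Qed.

End EdgeDeletion.

Section PerronRows.
Local Open Scope ring_scope.
Variables (R : rcfType) (n : nat) (E : {set {set 'I_n}}) (rho : R) (x : 'cV[R]_n).
Hypothesis Hp : distance_perron E rho x.

Lemma sigmaE (C : {set 'I_n}) : sigma x C = \sum_w (w \in C)%:R * x w 0.
Proof.
by rewrite /sigma big_mkcond; apply: eq_bigr => w _; case: (w \in C); rewrite ?mul1r ?mul0r.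
Qed.

Lemma sigma_set1 w : sigma x [set w] = x w 0.
Proof. exact: big_set1. Qed.

Lemma distance_perron_row a : rho * x a 0 = \sum_w (hdist E a w)%:R * x w 0.
Proof.
have [_ _ Dx _ _] := Hp; have := congr1 (fun M : 'cV[R]_n => M a 0) Dx.
by rewrite !mxE => <-; apply: eq_bigr => w _; rewrite mxE.
Qed.

Variable e : {set 'I_n}.
Hypotheses (HT : hypertree E) (He : e \in E).
Local Notation T c := (comp_del E e c).

Lemma rho_diff_edge a b : a \in e -> b \in e -> a != b ->
  rho * x a 0 - rho * x b 0 = sigma x (T b) - sigma x (T a).
Proof.
move=> ae be ab; rewrite !distance_perron_row !sigmaE -!sumrB; apply: eq_bigr => w _.
rewrite -!mulrBl; congr (_ * _).
by case: (edge_sideP HT He w ae be ab) => ->; rewrite /=; lra.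
Qed.

Lemma sigma_edge_partition a b : a \in e -> b \in e -> a != b ->
  sigma x [set w | hdist E w a == hdist E w b] + sigma x (T a) + sigma x (T b)
    = \sum_w x w 0.
Proof.
move=> ae be ab; rewrite !sigmaE -!big_split; apply: eq_bigr => w _.
rewrite /= (eq_hdist_edgeE HT He w ae be ab) -!mulrDl.
by case: (edge_sideP HT He w ae be ab); rewrite /= ?add0r ?addr0 mul1r.
Qed.

Lemma rho_diff_leaf u v w : v \in e -> e :\: [set u; v] = [set w] -> hdeg E w = 1%N ->
  rho * x w 0 - rho * x v 0 = sigma x (T v) - x w 0.
Proof.
move=> ve ew deg1; have [we _ wv] := mem_setD_pair ew.
by rewrite rho_diff_edge // (comp_del_leaf He deg1 we) sigma_set1.
Qed.

End PerronRows.

Local Open Scope ring_scope.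

Lemma combine_edge_rows (R : realFieldType) (rho xu1 xv1 xu2 xv2 tu1 tv1 tu2 tv2 a1 a2 S : R) :
  rho * xu1 - rho * xv1 = tv1 - tu1 -> rho * xu2 - rho * xv2 = tv2 - tu2 ->
  a1 + tu1 + tv1 = S -> a2 + tu2 + tv2 = S ->
  rho * (xu1 - xu2) - rho * (xv1 - xv2) = 2 * (tu2 - tu1) + a2 - a1.
Proof. by rewrite !mulrBr; lra. Qed.

Lemma combine_leaf_rows (R : realFieldType)
    (rho xu1 xv1 xw1 xu2 xv2 xw2 tu1 tv1 tu2 tv2 S : R) :
  rho * xu1 - rho * xv1 = tv1 - tu1 -> rho * xu2 - rho * xv2 = tv2 - tu2 ->
  rho * xw1 - rho * xv1 = tv1 - xw1 -> rho * xw2 - rho * xv2 = tv2 - xw2 ->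
  xw1 + tu1 + tv1 = S -> xw2 + tu2 + tv2 = S ->
  (rho + 1) * (xw1 - xw2) - rho * (xv1 - xv2) = xw2 - xw1 + tu2 - tu1 /\
  rho * (xu1 - xu2) - (rho + 1) * (xw1 - xw2) = tu2 - tu1.
Proof. by split; rewrite mulrDl mul1r !mulrBr; lra. Qed.

Theorem lemma2p1 (R : rcfType) (n : nat) (E : {set {set 'I_n}})
  (rho : R) (x : 'cV[R]_n) (e1 e2 : {set 'I_n}) (u1 v1 u2 v2 : 'I_n) :
  hypertree E ->
  distance_perron E rho x ->
  e1 \in E -> e2 \in E ->
  u1 \in e1 -> v1 \in e1 -> u2 \in e2 -> v2 \in e2 ->
  hdist E u1 u2 = (hdist E v1 v2 + 2)%N ->
  let T1 := comp_del E e1 u1 in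
  let T2 := comp_del E e2 u2 in
  let A1 := [set w | hdist E w u1 == hdist E w v1] in
  let A2 := [set w | hdist E w u2 == hdist E w v2] in
  (rho * (x u1 0 - x u2 0) - rho * (x v1 0 - x v2 0)
     = 2 * (sigma x T2 - sigma x T1) + sigma x A2 - sigma x A1)
  /\
  (forall w1 w2 : 'I_n,
     e1 :\: [set u1; v1] = [set w1] -> e2 :\: [set u2; v2] = [set w2] ->
     hdeg E w1 = 1%N -> hdeg E w2 = 1%N ->
     (rho + 1) * (x w1 0 - x w2 0) - rho * (x v1 0 - x v2 0)
       = x w2 0 - x w1 0 + sigma x T2 - sigma x T1
     /\
     rho * (x u1 0 - x u2 0) - (rho + 1) * (x w1 0 - x w2 0)
       = sigma x T2 - sigma x T1).
Proof.
move=> HT Hp e1E e2E u1e1 v1e1 u2e2 v2e2 Hd T1 T2 A1 A2.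
have conn : hg_connected E by case: HT.
have uv1 : u1 != v1.
  by apply/eqP => u1v1; have := hdist_edge_le u1 conn e2E u2e2 v2e2; rewrite Hd u1v1; lia.
have uv2 : u2 != v2.
  apply/eqP => u2v2; have := hdist_edge_le u2 conn e1E u1e1 v1e1.
  by rewrite (hdist_sym u2 u1 conn) (hdist_sym u2 v1 conn) Hd u2v2; lia.
have s1 := rho_diff_edge Hp HT e1E u1e1 v1e1 uv1.
have s2 := rho_diff_edge Hp HT e2E u2e2 v2e2 uv2.
have p1 := sigma_edge_partition x HT e1E u1e1 v1e1 uv1.
have p2 := sigma_edge_partition x HT e2E u2e2 v2e2 uv2.
split; first exact: combine_edge_rows s1 s2 p1 p2.
move=> w1 w2 ew1 ew2 deg1 deg2.
have l1 := rho_diff_leaf Hp HT e1E v1e1 ew1 deg1.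
have l2 := rho_diff_leaf Hp HT e2E v2e2 ew2 deg2.
rewrite (eq_hdist_leaf HT e1E u1e1 v1e1 uv1 ew1 deg1) sigma_set1 in p1.
rewrite (eq_hdist_leaf HT e2E u2e2 v2e2 uv2 ew2 deg2) sigma_set1 in p2.
exact: combine_leaf_rows s1 s2 l1 l2 p1 p2.
Qed.
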